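(* Let $\psi_1,\psi_2$ be real random fields on $\mathbb{R}^2$ and $k_R>0$, and let $E(k)$, $G_1(k)$, $G_2(k)$, $P(k)$, $\Gamma(k)$ be as defined in the context. Then for every wavenumber $k\in(0,+\infty)$ with $E(k)>0$, \[ |2\Gamma(k)-1| \le \frac{k^2+[1-P(k)]\,k_R^2}{k^2+k_R^2\,P(k)}. \]
   Context: Two-layer quasi-geostrophic setting. $\psi_1,\psi_2$ are the (random) streamfunctions of the upper and lower layer, real fields on $\mathbb{R}^2$ with Fourier transforms $\hat\psi_\alpha$, so that $\psi_\alpha(\mathbf{x})=\int_{\mathbb{R}^2}\hat\psi_\alpha(\mathbf{k})e^{i\mathbf{k}\cdot\mathbf{x}}\,d\mathbf{k}$; $\langle\cdot\rangle$ denotes ensemble average. For fields $a,b$ and $k>0$ define the bracket \[ \langle a,b\rangle_k=\frac12\int_{A\in SO(2)} d\Omega(A)\; k\,\big\langle \hat a(kA\mathbf{e})\overline{\hat b(kA\mathbf{e})}+\overline{\hat a(kA\mathbf{e})}\hat b(kA\mathbf{e})\big\rangle, \] where $\mathbf{e}$ is a fixed unit vector and $d\Omega$ is the rotation-invariant measure on $SO(2)$; it is symmetric, bilinear, satisfies $\langle a,a\rangle_k\ge 0$ and $\langle \Delta a,b\rangle_k=\langle a,\Delta b\rangle_k=-k^2\langle a,b\rangle_k$. The potential vorticities are $q_1=\Delta\psi_1+\frac{k_R^2}{2}(\psi_2-\psi_1)$ and $q_2=\Delta\psi_2-\frac{k_R^2}{2}(\psi_2-\psi_1)$, with $k_R>0$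 the Rossby wavenumber (a constant Coriolis parameter does not contribute at $k>0$ and is omitted). Let $\psi=(\psi_1+\psi_2)/2$, $\tau=(\psi_1-\psi_2)/2$. Define the energy spectrum $E(k)=-\langle\psi_1,q_1\rangle_k-\langle\psi_2,q_2\rangle_k$, which equals $E_K(k)+E_P(k)$ with barotropic spectrum $E_K(k)=2k^2\langle\psi,\psi\rangle_k$ and baroclinic spectrum $E_P(k)=2(k^2+k_R^2)\langle\tau,\tau\rangle_k$. Define potential enstrophy spectra $G_\alpha(k)=\langle q_\alpha,q_\alpha\rangle_k$ and $G(k)=G_1(k)+G_2(k)$ (when $E(k)>0$ one has $G(k)>0$). For $k$ with $E(k)>0$ define $P(k)=E_P(k)/E(k)\in[0,1]$ (so $E_K=(1-P)E$) and $\Gamma(k)=G_1(k)/G(k)\in[0,1]$ (so $G_2=(1-\Gamma)G$). *)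

From HB Require Import structures.
From mathcomp Require Import all_boot all_order all_algebra.
From mathcomp Require Import all_classical all_reals all_analysis.
Set Implicit Arguments. Unset Strict Implicit. Unset Printing Implicit Defensive.
Import Order.TTheory GRing.Theory Num.Theory.
Import numFieldNormedType.Exports.
Local Open Scope classical_set_scope.
Local Open Scope ring_scope.

(* A (random) field is represented through its (random) Fourier transform:
   fhat omega x y = (Re, Im) of \hat a(x,y) for the sample omega. *)
Definition FT (T : Type) (R : realType) := T -> R -> R -> R * R.

Section FTops.
Context {T : Type} {R : realType}.

Definition ftadd (a b : FT T R) : FT T R :=
  fun w x y => ((a w x y).1 + (b w x y).1, (a w x y).2 + (b w x y).2).
Definition ftscale (c : R) (a : FT T R) : FT T R :=
  fun w x y => (c * (a w x y).1, c * (a w x y).2).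
(* Fourier transform of the Laplacian: \hat{Delta a}(xi) = -|xi|^2 \hat a(xi) *)
Definition ftlap (a : FT T R) : FT T R :=
  fun w x y => (- (x ^+ 2 + y ^+ 2) * (a w x y).1, - (x ^+ 2 + y ^+ 2) * (a w x y).2).

Definition real_field (a : FT T R) : Prop :=
  forall w x y, (a w (- x) (- y)).1 = (a w x y).1 /\
                (a w (- x) (- y)).2 = - (a w x y).2.

(* the point k A e with A the rotation of angle theta and e = (1,0) *)
Definition on_circle (a : FT T R) (k : R) (z : T * R) : R * R :=
  a z.1 (k * cos z.2) (k * sin z.2).

(* (u vbar + ubar v) for u = (ur,ui), v = (vr,vi): equals 2 (ur vr + ui vi) *)
Definition herm2 (u v : R * R) : R := 2 * (u.1 * v.1 + u.2 * v.2).
End FTops.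

Section Bracket.
Context {d : measure_display} {Om : measurableType d} {R : realType}.
Variable (P : probability Om R).

(* product of the ensemble average and the rotation-invariant measure on
   SO(2), parametrized by the angle theta in [0, 2 pi[ *)
Definition PxSO2 := product_measure1 P (@lebesgue_measure R).
Definition SO2dom : set (Om * R) := setT `*` `[0, 2 * pi[%classic.

Definition bracket (a b : FT Om R) (k : R) : R :=
  2^-1 * k * Rintegral PxSO2 SO2dom
    (fun z => herm2 (on_circle a k z) (on_circle b k z)).

Variables (kR : R) (psi1 psi2 : FT Om R).

Definition q1 : FT Om R :=
  ftadd (ftlap psi1) (ftscale (kR ^+ 2 / 2) (ftadd psi2 (ftscale (-1) psi1))).
Definition q2 : FT Om R :=
  ftadd (ftlap psi2) (ftscale (- (kR ^+ 2 / 2)) (ftadd psi2 (ftscale (-1) psi1))).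
Definition psiB : FT Om R := ftscale (2^-1) (ftadd psi1 psi2).
Definition tauB : FT Om R := ftscale (2^-1) (ftadd psi1 (ftscale (-1) psi2)).

Definition Espec (k : R) : R := - bracket psi1 q1 k - bracket psi2 q2 k.
Definition EKspec (k : R) : R := 2 * k ^+ 2 * bracket psiB psiB k.
Definition EPspec (k : R) : R := 2 * (k ^+ 2 + kR ^+ 2) * bracket tauB tauB k.
Definition G1spec (k : R) : R := bracket q1 q1 k.
Definition G2spec (k : R) : R := bracket q2 q2 k.
Definition Gspec (k : R) : R := G1spec k + G2spec k.
Definition Pfrac (k : R) : R := EPspec k / Espec k.
Definition Gammafrac (k : R) : R := G1spec k / Gspec k.

Definition L2_on_circle (a : FT Om R) (k : R) : Prop :=
  measurable_fun SO2dom (fun z => (on_circle a k z).1) /\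
  measurable_fun SO2dom (fun z => (on_circle a k z).2) /\
  PxSO2.-integrable SO2dom (fun z => ((on_circle a k z).1 ^+ 2)%:E) /\
  PxSO2.-integrable SO2dom (fun z => ((on_circle a k z).2 ^+ 2)%:E).
End Bracket.

From HB Require Import structures.
From mathcomp Require Import all_boot all_order all_algebra.
From mathcomp Require Import all_classical all_reals all_analysis.
From mathcomp Require Import measurable_realfun ring lra.
Set Implicit Arguments.
Unset Strict Implicit.
Unset Printing Implicit Defensive.

Import Order.TTheory GRing.Theory Num.Theory.
Local Open Scope ring_scope.

(* On the circle |xi| = k the Laplacian acts as multiplication by -k^2, so
   psi1, psi2, q1, q2, psi and tau are there fixed real combinations of psi1
   and psi2, and every spectrum is a quadratic form in the Gram entries
   g11 = <psi1,psi1>_k, g12 = <psi1,psi2>_k, g22 = <psi2,psi2>_k.  In these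
   terms G = k^2 E + kR^2 E_P, G1 - G2 = k^2 (k^2 + kR^2) (g11 - g22) and
   (k^2 + kR^2) E - kR^2 E_P = k^2 (k^2 + kR^2) (g11 + g22), so 2 Gamma - 1
   and the right-hand side are (g11 - g22) / c and (g11 + g22) / c for the
   same c = G / (k^2 (k^2 + kR^2)) > 0, and the bound reduces to
   |g11 - g22| <= g11 + g22. *)

Definition lincomb {R : pzRingType} (a b : R) (u v : R * R) : R * R :=
  (a * u.1 + b * v.1, a * u.2 + b * v.2).

Lemma lincomb10 (R : pzRingType) (u v : R * R) : lincomb 1 0 u v = u.
Proof. by case: u => x y; rewrite /lincomb /= !mul1r !mul0r !addr0. Qed.

Lemma lincomb01 (R : pzRingType) (u v : R * R) : lincomb 0 1 u v = v.
Proof. by case: v => x y; rewrite /lincomb /= !mul1r !mul0r !add0r. Qed.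

Lemma herm2_lincomb (R : realType) (a b c e : R) (u v : R * R) :
  herm2 (lincomb a b u v) (lincomb c e u v) =
  a * c * herm2 u u + (a * e + b * c) * herm2 u v + b * e * herm2 v v.
Proof. rewrite /herm2 /lincomb /=; ring. Qed.

Section SquareIntegrable.
Context d (T : measurableType d) (R : realType) (mu : {measure set T -> \bar R}).
Variables (D : set T) (mD : measurable D).

Definition square_integrable (f : T -> R * R) : Prop :=
  measurable_fun D (fun z => (f z).1) /\ measurable_fun D (fun z => (f z).2) /\
  mu.-integrable D (fun z => ((f z).1 ^+ 2)%:E) /\
  mu.-integrable D (fun z => ((f z).2 ^+ 2)%:E).

Lemma integrableZl_EFin (r : R) (h : T -> R) :
  mu.-integrable D (EFin \o h) -> mu.-integrable D (EFin \o (fun z => r * h z)).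
Proof. by move=> /(integrableZl mD r); apply: eq_integrable. Qed.

Lemma integrableD_EFin (h1 h2 : T -> R) :
  mu.-integrable D (EFin \o h1) -> mu.-integrable D (EFin \o h2) ->
  mu.-integrable D (EFin \o (fun z => h1 z + h2 z)).
Proof. by move=> i1 i2; have := integrableD mD i1 i2; apply: eq_integrable. Qed.

Lemma integrable_herm2 (f g : T -> R * R) :
  square_integrable f -> square_integrable g ->
  mu.-integrable D (EFin \o (fun z => herm2 (f z) (g z))).
Proof.
move=> [mf1 [mf2 [if1 if2]]] [mg1 [mg2 [ig1 ig2]]].
pose s z := (f z).1 ^+ 2 + (f z).2 ^+ 2 + ((g z).1 ^+ 2 + (g z).2 ^+ 2).
have i_s : mu.-integrable D (EFin \o s).
  by apply: integrableD_EFin; apply: integrableD_EFin.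
apply: (le_integrable mD _ _ i_s).
  apply/measurable_EFinP; apply: measurable_funM => //.
  by apply: measurable_funD; apply: measurable_funM.
move=> z _ /=; rewrite lee_fin /s /herm2.
have := sqr_ge0 ((f z).1 - (g z).1); have := sqr_ge0 ((f z).2 - (g z).2).
have := sqr_ge0 ((f z).1 + (g z).1); have := sqr_ge0 ((f z).2 + (g z).2).
move=> *; rewrite [`|_ + _|]ger0_norm; last by nra.
by rewrite ler_norml; apply/andP; split; nra.
Qed.

Lemma Rintegral_herm2_lincomb (f g : T -> R * R) (a b c e : R) :
  square_integrable f -> square_integrable g ->
  \int[mu]_(z in D) herm2 (lincomb a b (f z) (g z)) (lincomb c e (f z) (g z)) =
  a * c * \int[mu]_(z in D) herm2 (f z) (f z) +
  (a * e + b * c) * \int[mu]_(z in D) herm2 (f z) (g z) +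
  b * e * \int[mu]_(z in D) herm2 (g z) (g z).
Proof.
move=> sf sg.
have iff := integrable_herm2 sf sf; have ifg := integrable_herm2 sf sg.
have igg := integrable_herm2 sg sg.
under eq_Rintegral => z _ do rewrite herm2_lincomb.
have iZff := integrableZl_EFin (a * c) iff.
have iZfg := integrableZl_EFin (a * e + b * c) ifg.
have iZgg := integrableZl_EFin (b * e) igg.
rewrite RintegralD //; last exact: integrableD_EFin.
by rewrite RintegralD // RintegralZl // RintegralZl // RintegralZl.
Qed.

End SquareIntegrable.

Section GramExpansion.
Context {d : measure_display} {Om : measurableType d} {R : realType}.
Variable P : probability Om R.

Lemma measurable_SO2dom : measurable (SO2dom : set (Om * R)).
Proof. exact: measurableX measurableT (measurable_itv _). Qed.

Lemma bracket_lincomb (a b u v : FT Om R) (k al be ga de : R) :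
  L2_on_circle P u k -> L2_on_circle P v k ->
  on_circle a k =1 (fun z => lincomb al be (on_circle u k z) (on_circle v k z)) ->
  on_circle b k =1 (fun z => lincomb ga de (on_circle u k z) (on_circle v k z)) ->
  bracket P a b k = al * ga * bracket P u u k + (al * de + be * ga) * bracket P u v k +
                    be * de * bracket P v v k.
Proof.
move=> Lu Lv ea eb; rewrite /bracket.
under eq_Rintegral => z _ do rewrite ea eb.
(* [mu] must be given: the sigma-algebra of [PxSO2 P] on the angle factor is
   only convertible to the one [measurable_SO2dom] is stated for. *)
rewrite (Rintegral_herm2_lincomb (mu := PxSO2 P) measurable_SO2dom) //; ring.
Qed.

Lemma bracket_ge0 (a : FT Om R) (k : R) : 0 <= k -> 0 <= bracket P a a k.
Proof.
move=> k_ge0; rewrite /bracket !mulr_ge0 ?invr_ge0 //.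
by apply: Rintegral_ge0 => z _; rewrite /herm2 mulr_ge0 // addr_ge0 // -expr2 sqr_ge0.
Qed.

End GramExpansion.

Lemma polar_sqrD (R : realType) (k t : R) :
  (k * cos t) ^+ 2 + (k * sin t) ^+ 2 = k ^+ 2.
Proof. by rewrite !exprMn -mulrDr cos2Dsin2 mulr1. Qed.

Section GramSpectra.
Context {d : measure_display} {Om : measurableType d} {R : realType}.
Variables (P : probability Om R) (kR k : R) (psi1 psi2 : FT Om R).
Hypotheses (L1 : L2_on_circle P psi1 k) (L2 : L2_on_circle P psi2 k).

Local Notation on_basis al be :=
  (fun z => lincomb al be (on_circle psi1 k z) (on_circle psi2 k z)).

Lemma on_circle_psi1 : on_circle psi1 k =1 on_basis 1 0.
Proof. by move=> z; rewrite lincomb10. Qed.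

Lemma on_circle_psi2 : on_circle psi2 k =1 on_basis 0 1.
Proof. by move=> z; rewrite lincomb01. Qed.

Lemma on_circle_q1 :
  on_circle (q1 kR psi1 psi2) k =1 on_basis (- (k ^+ 2 + kR ^+ 2 / 2)) (kR ^+ 2 / 2).
Proof.
move=> z; rewrite /on_circle /q1 /ftadd /ftlap /ftscale /lincomb /= polar_sqrD.
by congr pair; ring.
Qed.

Lemma on_circle_q2 :
  on_circle (q2 kR psi1 psi2) k =1 on_basis (kR ^+ 2 / 2) (- (k ^+ 2 + kR ^+ 2 / 2)).
Proof.
move=> z; rewrite /on_circle /q2 /ftadd /ftlap /ftscale /lincomb /= polar_sqrD.
by congr pair; ring.
Qed.

Lemma on_circle_tauB : on_circle (tauB psi1 psi2) k =1 on_basis 2^-1 (- 2^-1).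
Proof.
by move=> z; rewrite /on_circle /tauB /ftadd /ftscale /lincomb /=; congr pair; ring.
Qed.

Local Notation g11 := (bracket P psi1 psi1 k).
Local Notation g12 := (bracket P psi1 psi2 k).
Local Notation g22 := (bracket P psi2 psi2 k).

Lemma Espec_gram :
  Espec P kR psi1 psi2 k = (k ^+ 2 + kR ^+ 2 / 2) * (g11 + g22) - kR ^+ 2 * g12.
Proof.
rewrite /Espec (bracket_lincomb L1 L2 on_circle_psi1 on_circle_q1).
by rewrite (bracket_lincomb L1 L2 on_circle_psi2 on_circle_q2); field.
Qed.

Lemma EPspec_gram :
  EPspec P kR psi1 psi2 k = (k ^+ 2 + kR ^+ 2) / 2 * (g11 + g22 - 2 * g12).
Proof.
by rewrite /EPspec (bracket_lincomb L1 L2 on_circle_tauB on_circle_tauB); field.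
Qed.

Lemma G1spec_gram : G1spec P kR psi1 psi2 k =
  (k ^+ 2 + kR ^+ 2 / 2) ^+ 2 * g11 - kR ^+ 2 * (k ^+ 2 + kR ^+ 2 / 2) * g12 +
  (kR ^+ 2 / 2) ^+ 2 * g22.
Proof. by rewrite /G1spec (bracket_lincomb L1 L2 on_circle_q1 on_circle_q1); field. Qed.

Lemma G2spec_gram : G2spec P kR psi1 psi2 k =
  (kR ^+ 2 / 2) ^+ 2 * g11 - kR ^+ 2 * (k ^+ 2 + kR ^+ 2 / 2) * g12 +
  (k ^+ 2 + kR ^+ 2 / 2) ^+ 2 * g22.
Proof. by rewrite /G2spec (bracket_lincomb L1 L2 on_circle_q2 on_circle_q2); field. Qed.

End GramSpectra.

Lemma enstrophy_asymmetry_bound (R : realFieldType) (K r E EP G1 G2 s t : R) :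
  0 < K -> 0 <= r -> 0 < E -> 0 <= EP ->
  G1 + G2 = K * E + r * EP ->
  G1 - G2 = K * (K + r) * t ->
  (K + r) * E - r * EP = K * (K + r) * s ->
  `|t| <= s ->
  `|2 * (G1 / (G1 + G2)) - 1| <= (K + (1 - EP / E) * r) / (K + r * (EP / E)).
Proof.
move=> K_gt0 r_ge0 E_gt0 EP_ge0 eG eGsub eEs t_le_s.
have G_gt0 : 0 < G1 + G2 by rewrite eG ltr_wpDr ?mulr_ge0 ?mulr_gt0.
have -> : 2 * (G1 / (G1 + G2)) - 1 = (G1 - G2) / (G1 + G2).
  by field; rewrite gt_eqF.
have -> : (K + (1 - EP / E) * r) / (K + r * (EP / E)) =
          ((K + r) * E - r * EP) / (G1 + G2).
  by rewrite eG; field; rewrite -eG !gt_eqF.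
have KKr_gt0 : 0 < K * (K + r) by rewrite mulr_gt0 // ltr_wpDr.
rewrite eGsub eEs normrM [`|_^-1|]gtr0_norm ?invr_gt0 // ler_pM2r ?invr_gt0 //.
by rewrite normrM gtr0_norm ?ler_pM2l.
Qed.

Theorem proposition1 (d : measure_display) (Om : measurableType d)
  (R : realType) (P : probability Om R) (kR : R) (psi1 psi2 : FT Om R) (k : R) :
  0 < kR ->
  real_field psi1 -> real_field psi2 ->
  0 < k ->
  L2_on_circle P psi1 k -> L2_on_circle P psi2 k ->
  0 < Espec P kR psi1 psi2 k ->
  `|2 * Gammafrac P kR psi1 psi2 k - 1| <=
    (k ^+ 2 + (1 - Pfrac P kR psi1 psi2 k) * kR ^+ 2) /
    (k ^+ 2 + kR ^+ 2 * Pfrac P kR psi1 psi2 k).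
Proof.
move=> _ _ _ k_gt0 L1 L2 E_gt0.
have k_ge0 := ltW k_gt0.
have g11_ge0 := bracket_ge0 P psi1 k_ge0.
have g22_ge0 := bracket_ge0 P psi2 k_ge0.
have EP_ge0 : 0 <= EPspec P kR psi1 psi2 k.
  by rewrite /EPspec mulr_ge0 ?bracket_ge0 // mulr_ge0 // addr_ge0 ?sqr_ge0.
rewrite /Gammafrac /Pfrac /Gspec.
apply: (enstrophy_asymmetry_bound
  (s := bracket P psi1 psi1 k + bracket P psi2 psi2 k)
  (t := bracket P psi1 psi1 k - bracket P psi2 psi2 k)) => //.
- by rewrite exprn_gt0.
- exact: sqr_ge0.
- by rewrite (G1spec_gram kR L1 L2) (G2spec_gram kR L1 L2)
    (Espec_gram kR L1 L2) (EPspec_gram kR L1 L2); field.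
- by rewrite (G1spec_gram kR L1 L2) (G2spec_gram kR L1 L2); field.
- by rewrite (Espec_gram kR L1 L2) (EPspec_gram kR L1 L2); field.
- by rewrite ler_norml; apply/andP; split; lra.
Qed.
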